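(* In the setting of the context, let the opponent use an arbitrary policy $\pi^2\in\Pi^{\mathrm{HR}}$, let $K_T=\max\{k: t_k\le T\}$ be the number of episodes of PSRL-ZSG up to time $T$, and set $t_{K_T+1}=T+1$. Then $$\mathbb{E}\left[TJ(\theta_* )-\sum_{k=1}^{K_T}\sum_{t=t_k}^{t_{k+1}-1}J(\theta_k)\right]\le \mathbb{E}[K_T].$$
   Context: Two-player zero-sum stochastic game: finite state space $\mathcal{S}$, finite joint action space $\mathcal{A}=\mathcal{A}^1\times\mathcal{A}^2$, known reward $r:\mathcal{S}\times\mathcal{A}^1\times\mathcal{A}^2\to[-1,0]$, unknown transition kernel $\theta_*$ drawn from a prior $\mu_1$ supported in $\Omega_*$. At each time $t$, the agent (maximizer) and opponent (minimizer) observe $s_t$, choose $a_t=(a_t^1,a_t^2)$ simultaneously, the agent gets $r(s_t,a_t)$ and $s_{t+1}\sim\theta_*(\cdot\mid s_t,a_t)$. History $h_t=(s_1,a_1,\dots,s_t)$; $\Pi^{\mathrm{HR}}$ is the class of history-dependent randomized policies, $\Pi^{\mathrm{SR}}$ the stationary randomized ones. For a matrix $G$, $\mathrm{val}(G)=\max_p\min_q p^\top Gq$. Finite Diameter: $\max_{s,s'}\max_{\pi^2\in\Pi^{\mathrm{SR}}}\min_{\pi^1\in\Pi^{\mathrm{SR}}}T^{(\pi^1,\pi^2)}_{s\to s'}\le D<\infty$ (expected hitting time). For such $\theta$, there exist a unique $J(\theta)\in[-1,0]$ and $v(\cdot,\theta)$ (unique up to constants) with $J(\theta)+v(s,\theta)=\mathrm{val}\{r(s,\cdot,\cdot)+\sum_{s'}\theta(s'\mid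 s,\cdot,\cdot)v(s',\theta)\}$ for all $s$. $\Omega_*$ is the set of kernels satisfying Finite Diameter with $\max_s v(s,\theta)-\min_s v(s,\theta)\le H$ for a known $H$; $v$ is normalized with $0\le v\le H$. PSRL-ZSG: posterior $\mu_{t+1}(d\theta)\propto\theta(s_{t+1}\mid s_t,a_t)\mu_t(d\theta)$; $N_t(s,a)$ = number of visits to $(s,a)$ before time $t$. Episodes $k=1,2,\dots$ start at $t_1=1<t_2<\cdots$, $T_k=t_{k+1}-t_k$, $T_0=1$. At $t_k$ sample $\theta_k\sim\mu_{t_k}$ and compute the agent's maximin stationary policy $\pi_k^1$ (agent's component of a Nash equilibrium of the Bellman equation above for $\theta_k$); play $a_t^1\sim\pi_k^1(\cdot\mid s_t)$ during the episode. Episode $k$ continues while $t\le t_k+T_{k-1}$ and $N_t(s,a)\le 2N_{t_k}(s,a)$ for all $(s,a)$. Expectations are over the prior, the algorithm's randomness, the opponent's randomness and transitions. *)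

From HB Require Import structures.
From mathcomp Require Import all_boot all_order all_algebra.
From mathcomp Require Import all_classical all_reals all_analysis.
Set Implicit Arguments. Unset Strict Implicit. Unset Printing Implicit Defensive.
Import Order.TTheory GRing.Theory Num.Theory.
Import numFieldNormedType.Exports.
Local Open Scope classical_set_scope.
Local Open Scope ring_scope.

Section Game.
Context {R : realType} {S A1 A2 : finType}.

Definition is_dist (X : finType) (p : X -> R) : Prop :=
  (forall x, 0 <= p x) /\ \sum_x p x = 1.

Definition tkernel := S -> A1 -> A2 -> S -> R.

Definition is_kernel (th : tkernel) : Prop :=
  forall s a1 a2, is_dist (th s a1 a2).

Definition stat_pol1 (p : S -> A1 -> R) : Prop := forall s, is_dist (p s).
Definition stat_pol2 (q : S -> A2 -> R) : Prop := forall s, is_dist (q s).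

Definition payoff (G : A1 -> A2 -> R) (p : A1 -> R) (q : A2 -> R) : R :=
  \sum_a1 \sum_a2 p a1 * G a1 a2 * q a2.

Definition val (G : A1 -> A2 -> R) : R :=
  sup [set inf [set payoff G p q | q in [set q | is_dist q]]
      | p in [set p | is_dist p]].

Definition is_maximin (G : A1 -> A2 -> R) (p : A1 -> R) : Prop :=
  is_dist p /\ inf [set payoff G p q | q in [set q | is_dist q]] = val G.

Definition bgame (r : S -> A1 -> A2 -> R) (th : tkernel) (v : S -> R) (s : S)
  : A1 -> A2 -> R :=
  fun a1 a2 => r s a1 a2 + \sum_s' th s a1 a2 s' * v s'.

Definition bellman (r : S -> A1 -> A2 -> R) (th : tkernel) (J : R) (v : S -> R)
  : Prop :=
  forall s, J + v s = val (bgame r th v s).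

(* the optimal average value J(theta) (unique solution when it exists) *)
Definition Jopt (r : S -> A1 -> A2 -> R) (th : tkernel) : R :=
  xget 0 [set J | exists v, bellman r th J v].

(* probability of not having hit s' within the first n steps, from s,
   for the Markov chain induced by stationary policies p, q *)
Fixpoint nothit (th : tkernel) (p : S -> A1 -> R) (q : S -> A2 -> R)
  (s' : S) (n : nat) (s : S) : R :=
  match n with
  | 0 => (s != s')%:R
  | n.+1 => (s != s')%:R *
      \sum_s'' (\sum_a1 \sum_a2 p s a1 * q s a2 * th s a1 a2 s'')
               * nothit th p q s' n s''
  end.

(* expected hitting time T^{(p,q)}_{s -> s'} = sum_{n>=0} P(tau > n) *)
Definition hitting_time (th : tkernel) (p : S -> A1 -> R) (q : S -> A2 -> R)
  (s s' : S) : \bar R :=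
  (\sum_(0 <= n <oo) (nothit th p q s' n s)%:E)%E.

Definition finite_diameter (th : tkernel) (D : R) : Prop :=
  forall s s',
   (ereal_sup [set ereal_inf [set hitting_time th p q s s' | p in stat_pol1]
                 | q in stat_pol2] <= D%:E)%E.

Definition Omega (r : S -> A1 -> A2 -> R) (D H : R) (th : tkernel) : Prop :=
  is_kernel th /\ finite_diameter th D /\
  exists J v, bellman r th J v /\
    forall s s', v s - v s' <= H.
End Game.

Section PSRL.
Context {R : realType} {d : measure_display} {Theta : measurableType d}
  {S A1 A2 : finType}.
Variables (mu1 : probability Theta R)
  (P : Theta -> @tkernel R S A1 A2)
  (pol : Theta -> S -> A1 -> R)              (* maximin stationary policy of theta *)
  (pi2 : seq (S * (A1 * A2)) -> S -> A2 -> R). (* opponent's HR policy *)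

(* A history h_t = (s_1,a_1,...,s_{t-1},a_{t-1},s_t) is represented by the
   chronological list h = [:: (s_1,a_1); ...; (s_{t-1},a_{t-1})] and s = s_t;
   thus t = size h + 1. *)

(* likelihood prod_{tau < t} theta(s_{tau+1} | s_tau, a_tau) *)
Fixpoint lik (th : Theta) (h : seq (S * (A1 * A2))) (s : S) : R :=
  match h with
  | [::] => 1
  | (x, a) :: h' => P th x a.1 a.2 (head s (map fst h')) * lik th h' s
  end.

Definition post_exp (h : seq (S * (A1 * A2))) (s : S) (F : Theta -> R) : R :=
  (\int[mu1]_(th in setT) (lik th h s * F th)) /
  (\int[mu1]_(th in setT) lik th h s).

(* Expected accumulated per-step quantity g(theta_*, theta_k(t), [a new
   episode starts at t]) over the next n steps, starting at history (h, s),
   with current episode start t_k = tk, previous episode length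
   T_{k-1} = Tp, current sample theta_k = thk, and true parameter ths.
   N_t(s,a) = count_mem (s,a) h, N_{t_k}(s,a) = count_mem (s,a) (take (tk-1) h). *)
Fixpoint psrl_val (g : Theta -> Theta -> bool -> R) (n : nat) (ths : Theta)
  (h : seq (S * (A1 * A2))) (s : S) (tk Tp : nat) (thk : Theta) : R :=
  match n with
  | 0 => 0
  | n'.+1 =>
    let t := (size h).+1 in
    let newep := (tk + Tp < t)%N ||
      [exists x : S * (A1 * A2), (2 * count_mem x (take tk.-1 h) < count_mem x h)%N] in
    let cont (th : Theta) (tk' Tp' : nat) :=
      g ths th newep +
      \sum_a1 \sum_a2 \sum_s' pol th s a1 * pi2 h s a2 * P ths s a1 a2 s' *
         psrl_val g n' ths (rcons h (s, (a1, a2))) s' tk' Tp' th in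
    if newep then post_exp h s (fun th => cont th t (t - tk)%N)
    else cont thk tk Tp
  end.

(* E[ sum_{t=1}^T g(theta_*, theta_{k(t)}, [t = t_k for some k]) ],
   theta_* ~ mu_1, s_1 = s1.  Initial tk = 0, Tp = 0 force a new episode at
   t = 1 with t_1 = 1 and T_0 = 1 - 0 = 1; the initial thk is irrelevant. *)
Definition psrl_exp (g : Theta -> Theta -> bool -> R) (T : nat) (s1 : S) : R :=
  \int[mu1]_(ths in setT) psrl_val g T ths [::] s1 0 0 ths.

End PSRL.

From Pilot Require Import Defs.
From HB Require Import structures.
From mathcomp Require Import all_boot all_order all_algebra.
From mathcomp Require Import all_classical all_reals all_analysis.
From mathcomp Require Import measurable_realfun ring lra.
Set Implicit Arguments. Unset Strict Implicit. Unset Printing Implicit Defensive.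
Import Order.TTheory GRing.Theory Num.Theory.
Import numFieldNormedType.Exports.
Local Open Scope classical_set_scope.
Local Open Scope ring_scope.

(* Write E_h for integration against the unnormalised posterior lik(h) dmu1
   after history h, and J for J(θ).  Let a be the number of steps the current
   episode may still last before its length cap t_k + T_{k-1}, and b the number
   of steps it has already lasted.  By induction on the horizon, the expected
   remaining sum of J(θ⋆) - J(θ_k) - [t starts an episode] is at most
   E_h[a (-J(θ_k)) + b (-J(θ⋆))].  Inside an episode the summand is exactly the
   decrease of this potential.  When an episode starts, θ_k is a fresh posterior
   sample, so under E_h the pair (θ⋆, θ_k) is exchangeable (Fubini):
   J(θ⋆) - J(θ_k) averages to 0, and the new potential (t - t_k)(-J(θ_k))
   averages like (b + 1)(-J(θ⋆)), whose extra copy of -J(θ⋆) <= 1 is paid by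
   the indicator of the new episode.  The potential vanishes at t = 1. *)

Section BoundedMeasurable.
Context {R : realType} {d : measure_display} {T : measurableType d}.

Definition bmfun (f : T -> R) :=
  measurable_fun setT f /\ exists M : R, forall x, `|f x| <= M.

Lemma bmfun_cst c : bmfun (fun _ => c).
Proof. by split; [exact: measurable_cst | exists `|c|]. Qed.

Lemma bmfunD f g : bmfun f -> bmfun g -> bmfun (fun x => f x + g x).
Proof.
move=> [mf [M fM]] [mg [N gN]]; split; first exact: measurable_funD.
by exists (M + N) => x; rewrite (le_trans (ler_normD _ _)) // lerD.
Qed.

Lemma bmfunN f : bmfun f -> bmfun (fun x => - f x).
Proof.
move=> [mf [M fM]]; split; first exact: measurableT_comp.
by exists M => x; rewrite normrN.
Qed.

Lemma bmfunB f g : bmfun f -> bmfun g -> bmfun (fun x => f x - g x).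
Proof. by move=> bf bg; apply: bmfunD => //; exact: bmfunN. Qed.

Lemma bmfunM f g : bmfun f -> bmfun g -> bmfun (fun x => f x * g x).
Proof.
move=> [mf [M fM]] [mg [N gN]]; split; first exact: measurable_funM.
by exists (M * N) => x; rewrite normrM ler_pM.
Qed.

Lemma bmfun_norm f : bmfun f -> bmfun (fun x => `|f x|).
Proof.
move=> [mf [M fM]]; split; first exact: measurableT_comp.
by exists M => x; rewrite normr_id.
Qed.

Lemma bmfun_sum (I : Type) (r : seq I) (F : I -> T -> R) :
  (forall i, bmfun (F i)) -> bmfun (fun x => \sum_(i <- r) F i x).
Proof.
move=> bF; elim: r => [|i r IH].
  by under eq_fun do rewrite big_nil; exact: bmfun_cst.
by under eq_fun do rewrite big_cons; exact: bmfunD.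
Qed.

End BoundedMeasurable.

Lemma bmfun_comp {R : realType} {d1 d2 : measure_display} {T1 : measurableType d1}
    {T2 : measurableType d2} (f : T2 -> R) (g : T1 -> T2) :
  bmfun f -> measurable_fun setT g -> bmfun (fun x => f (g x)).
Proof. by move=> [mf [M fM]] mg; split; [exact: measurableT_comp | exists M]. Qed.

Lemma bmfun_integrable {R : realType} {d : measure_display} {T : measurableType d}
    (mu : measure T R) (f : T -> R) :
  (mu setT < +oo)%E -> bmfun f -> mu.-integrable setT (EFin \o f).
Proof.
move=> mu_fin [mf [M fM]]; apply: measurable_bounded_integrable => //.
exists M; split; first by rewrite num_real.
by move=> N MN x _ /=; exact: le_trans (fM x) (ltW MN).
Qed.

Section BoundedMeasurablePair.
Context {R : realType} {d1 d2 : measure_display} {T1 : measurableType d1}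
  {T2 : measurableType d2}.

Lemma bmfun_pair1 (C : T1 * T2 -> R) x : bmfun C -> bmfun (fun y => C (x, y)).
Proof. by move=> bC; exact: bmfun_comp bC (pair1_measurable x). Qed.

Lemma bmfun_pair2 (C : T1 * T2 -> R) y : bmfun C -> bmfun (fun x => C (x, y)).
Proof. by move=> bC; exact: bmfun_comp bC (pair2_measurable y). Qed.

Lemma bmfun_swap (C : T1 * T2 -> R) : bmfun C -> bmfun (fun z : T2 * T1 => C (z.2, z.1)).
Proof. by move=> bC; apply: bmfun_comp bC _; exact: measurable_fun_pair. Qed.

End BoundedMeasurablePair.

Lemma bmfun_diag {R : realType} {d : measure_display} {T : measurableType d}
    (C : T * T -> R) :
  bmfun C -> bmfun (fun x => C (x, x)).
Proof.
move=> bC; exact (bmfun_comp bC (measurable_fun_pair (@measurable_id _ T setT)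
                                                    (@measurable_id _ T setT))).
Qed.

Section ProbabilityIntegral.
Context {R : realType} {d : measure_display} {T : measurableType d}.
Variable mu : probability T R.

Lemma probability_lty : (mu setT < +oo)%E.
Proof. by rewrite probability_setT ltry. Qed.

Lemma fine_probability_setT : fine (mu setT) = 1.
Proof. by rewrite probability_setT. Qed.

Lemma product_probability_lty : ((mu \x mu)%E setT < +oo)%E.
Proof.
rewrite -setXTT product_measure1E //.
rewrite (_ : (_ * _)%E = 1%E) ?ltry //.
by rewrite -[RHS]mule1; congr (_ * _)%E; exact: probability_setT.
Qed.

Lemma Rintegral_norm_le (f : T -> R) (M : R) :
  bmfun f -> (forall x, `|f x| <= M) -> `|\int[mu]_x f x| <= M.
Proof.
move=> bf fM; have int_f := bmfun_integrable probability_lty bf.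
apply: le_trans (le_normr_Rintegral _ int_f) _ => //.
apply: le_trans (@le_Rintegral _ _ _ mu _ _ (fun=> M) _ _ _ _) _ => //.
- exact: bmfun_integrable probability_lty (bmfun_norm bf).
- exact: bmfun_integrable probability_lty (bmfun_cst M).
rewrite Rintegral_cst // (_ : fine _ = 1) ?mulr1 //.
exact: fine_probability_setT.
Qed.

Lemma Rintegral_swap (F : T * T -> R) :
  bmfun F -> \int[mu]_x \int[mu]_y F (x, y) = \int[mu]_y \int[mu]_x F (x, y).
Proof.
move=> bF; rewrite /Rintegral; congr fine.
have int_sec (f : T -> R) : bmfun f -> (\int[mu]_z (f z)%:E)%E \is a fin_num.
  by move=> bf; exact: integrable_fin_num (bmfun_integrable probability_lty bf).
transitivity (\int[mu]_x \int[mu]_y (EFin \o F) (x, y))%E.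
  apply: eq_integral => x _; rewrite fineK //.
  exact: int_sec (bmfun_pair1 x bF).
rewrite (Fubini (bmfun_integrable product_probability_lty bF)).
apply: eq_integral => y _; rewrite fineK //.
exact: int_sec (bmfun_pair2 y bF).
Qed.

Lemma bmfun_partial_Rintegral (F : T * T -> R) :
  bmfun F -> bmfun (fun x => \int[mu]_y F (x, y)).
Proof.
move=> bF; have [_ [M FM]] := bF; split.
  apply: measurableT_comp (fine_measurable measurableT) _.
  exact: measurable_fubini_F (bmfun_integrable product_probability_lty bF).
exists M => x; apply: Rintegral_norm_le => //.
exact: bmfun_pair1 x bF.
Qed.

End ProbabilityIntegral.

Section Distributions.
Context {R : realType} {X : finType}.
Implicit Types (p f : X -> R) (c : R).

Lemma dist_ge0 p x : is_dist p -> 0 <= p x.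
Proof. by case. Qed.

Lemma dist_le1 p x : is_dist p -> p x <= 1.
Proof. by move=> [p0 p1]; rewrite -p1 (bigD1 x) //= lerDl sumr_ge0. Qed.

Lemma dist_mean_cst p c : is_dist p -> \sum_x p x * c = c.
Proof. by move=> [_ p1]; rewrite -big_distrl /= p1 mul1r. Qed.

Lemma dist_mean_le p f c : is_dist p -> (forall x, f x <= c) -> \sum_x p x * f x <= c.
Proof.
move=> dp fc; rewrite -[leRHS](dist_mean_cst c dp).
by apply: ler_sum => x _; apply: ler_wpM2l => //; exact: dist_ge0.
Qed.

Lemma dist_mean_ge p f c : is_dist p -> (forall x, c <= f x) -> c <= \sum_x p x * f x.
Proof.
move=> dp fc; rewrite -[leLHS](dist_mean_cst c dp).
by apply: ler_sum => x _; apply: ler_wpM2l => //; exact: dist_ge0.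
Qed.

End Distributions.

Section MatrixGame.
Context {R : realType} {A1 A2 : finType}.
Implicit Types (G : A1 -> A2 -> R) (c : R).

Lemma payoffE G p q : payoff G p q = \sum_a1 p a1 * \sum_a2 q a2 * G a1 a2.
Proof.
rewrite /payoff; apply: eq_bigr => a1 _; rewrite mulr_sumr.
by apply: eq_bigr => a2 _; rewrite [q a2 * _]mulrC mulrA.
Qed.

Lemma payoff_le G p q c : is_dist p -> is_dist q ->
  (forall a1 a2, G a1 a2 <= c) -> payoff G p q <= c.
Proof.
by move=> dp dq Gc; rewrite payoffE; apply: dist_mean_le => // a1; exact: dist_mean_le.
Qed.

Lemma payoff_ge G p q c : is_dist p -> is_dist q ->
  (forall a1 a2, c <= G a1 a2) -> c <= payoff G p q.
Proof.
by move=> dp dq Gc; rewrite payoffE; apply: dist_mean_ge => // a1; exact: dist_mean_ge.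
Qed.

Lemma payoff_norm_le G p q : is_dist p -> is_dist q ->
  `|payoff G p q| <= \sum_a1 \sum_a2 `|G a1 a2|.
Proof.
have entry_le a1 a2 : `|G a1 a2| <= \sum_a1 \sum_a2 `|G a1 a2|.
  rewrite (bigD1 a1) //= (bigD1 a2) //= -addrA lerDl.
  by rewrite addr_ge0 // !sumr_ge0 // => *; rewrite sumr_ge0.
move=> dp dq; rewrite ler_norml payoff_le ?andbT // => [|a1 a2].
  apply: payoff_ge => // a1 a2; rewrite lerNl.
  by apply: le_trans (entry_le a1 a2); rewrite -normrN ler_norm.
exact: le_trans (ler_norm _) (entry_le a1 a2).
Qed.

Lemma inf_payoff_le G p q : is_dist p -> is_dist q ->
  inf [set payoff G p q' | q' in [set q' | is_dist q']] <= payoff G p q.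
Proof.
move=> dp dq; apply: ge_inf; last by exists q.
exists (- \sum_a1 \sum_a2 `|G a1 a2|) => _ [q' dq' <-].
by move: (payoff_norm_le G dp dq'); rewrite ler_norml => /andP[].
Qed.

Lemma val_le G c : (exists p : A1 -> R, is_dist p) -> (exists q : A2 -> R, is_dist q) ->
  (forall a1 a2, G a1 a2 <= c) -> Defs.val G <= c.
Proof.
move=> [p0 dp0] [q0 dq0] Gc; apply: ge_sup.
  by exists (inf [set payoff G p0 q | q in [set q | is_dist q]]), p0.
move=> _ [p dp <-]; exact: le_trans (inf_payoff_le G dp dq0) (payoff_le dp dq0 Gc).
Qed.

Lemma val_ge G c : (exists p : A1 -> R, is_dist p) -> (exists q : A2 -> R, is_dist q) ->
  (forall a1 a2, c <= G a1 a2) -> c <= Defs.val G.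
Proof.
move=> [p0 dp0] [q0 dq0] Gc.
apply: (@le_trans _ _ (inf [set payoff G p0 q | q in [set q | is_dist q]])).
  apply: lb_le_inf; first by exists (payoff G p0 q0), q0.
  by move=> _ [q dq <-]; apply: payoff_ge.
apply: ub_le_sup; last by exists p0.
exists (\sum_a1 \sum_a2 `|G a1 a2|) => _ [p dp <-].
apply: le_trans (inf_payoff_le G dp dq0) _.
exact: le_trans (ler_norm _) (payoff_norm_le G dp dq0).
Qed.

End MatrixGame.

Lemma Jopt_bounds {R : realType} {S A1 A2 : finType} (r : S -> A1 -> A2 -> R)
    (th : @tkernel R S A1 A2) (s0 : S) :
  (forall s a1 a2, -1 <= r s a1 a2 <= 0) -> is_kernel th ->
  (exists p : A1 -> R, is_dist p) -> (exists q : A2 -> R, is_dist q) ->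
  -1 <= Jopt r th <= 0.
Proof.
move=> r_bnd th_ker ex_p ex_q; rewrite /Jopt; case: xgetP => [J _ [v bellman_v] | _].
  have [smax _ v_max] := @arg_maxP _ R S s0 xpredT v isT.
  have [smin _ v_min] := @arg_minP _ R S s0 xpredT v isT.
  apply/andP; split.
    rewrite -(lerD2r (v smin)) bellman_v; apply: val_ge => // a1 a2.
    rewrite /bgame lerD //; first by case/andP: (r_bnd smin a1 a2).
    by apply: dist_mean_ge => // s'; apply: v_min.
  rewrite -(lerD2r (v smax)) bellman_v add0r; apply: val_le => // a1 a2.
  rewrite /bgame -[v smax]add0r lerD //; first by case/andP: (r_bnd smax a1 a2).
  by apply: dist_mean_le => // s'; apply: v_max.
by rewrite lerN10 lexx.
Qed.

Section Posterior.
Context {R : realType} {d : measure_display} {Theta : measurableType d}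
  {S A1 A2 : finType}.
Variables (mu1 : probability Theta R) (P : Theta -> @tkernel R S A1 A2).
Hypothesis P_kernel : forall th, is_kernel (P th).
Hypothesis P_meas : forall s a1 a2 s', measurable_fun setT (fun th => P th s a1 a2 s').

Local Notation post_exp := (post_exp mu1 P).

Lemma bmfun_kernel s a1 a2 s' : bmfun (fun th => P th s a1 a2 s').
Proof.
split; first exact: P_meas.
exists 1 => th; have dP := P_kernel th s a1 a2.
by rewrite ger0_norm; [exact: dist_le1 | exact: dist_ge0].
Qed.

Lemma lik_bounds th h s : 0 <= lik P th h s <= 1.
Proof.
elim: h => [|[x a] h /andP[lik0 lik1]] /=; first by rewrite ler01 lexx.
have [P0 P1] := (dist_ge0 (head s [seq y.1 | y <- h]) (P_kernel th x a.1 a.2),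
                 dist_le1 (head s [seq y.1 | y <- h]) (P_kernel th x a.1 a.2)).
by rewrite mulr_ge0 // mulr_ile1.
Qed.

Lemma bmfun_lik h s : bmfun (fun th => lik P th h s).
Proof.
elim: h => [|[x a] h IH] /=; first exact: bmfun_cst.
exact: bmfunM (bmfun_kernel _ _ _ _) IH.
Qed.

Lemma lik_rcons th h s a1 a2 s' :
  lik P th (rcons h (s, (a1, a2))) s' = lik P th h s * P th s a1 a2 s'.
Proof.
elim: h s => [|[x b] h IH] s /=; first by rewrite mulr1 mul1r.
by rewrite IH mulrA; case: h {IH}.
Qed.

Definition lik_int h s (f : Theta -> R) := \int[mu1]_th (lik P th h s * f th).
Definition lik_mass h s := \int[mu1]_th lik P th h s.

Lemma post_expE h s F : post_exp h s F = lik_int h s F / lik_mass h s.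
Proof. by []. Qed.

Lemma lik_int_integrable h s f :
  bmfun f -> mu1.-integrable setT (EFin \o (fun th => lik P th h s * f th)).
Proof.
by move=> bf; exact: bmfun_integrable (probability_lty mu1) (bmfunM (bmfun_lik h s) bf).
Qed.

Lemma lik_intD h s f g : bmfun f -> bmfun g ->
  lik_int h s (fun th => f th + g th) = lik_int h s f + lik_int h s g.
Proof.
move=> bf bg; rewrite /lik_int -RintegralD //; try exact: lik_int_integrable.
by apply: eq_Rintegral => th _; rewrite mulrDr.
Qed.

Lemma lik_intB h s f g : bmfun f -> bmfun g ->
  lik_int h s (fun th => f th - g th) = lik_int h s f - lik_int h s g.
Proof.
move=> bf bg; rewrite /lik_int -RintegralB //; try exact: lik_int_integrable.
by apply: eq_Rintegral => th _; rewrite mulrBr.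
Qed.

Lemma lik_intZ h s c f : bmfun f -> lik_int h s (fun th => c * f th) = c * lik_int h s f.
Proof.
move=> bf; rewrite /lik_int -RintegralZl //; last exact: lik_int_integrable.
by apply: eq_Rintegral => th _; rewrite mulrCA.
Qed.

Lemma lik_int_cst h s c : lik_int h s (fun=> c) = c * lik_mass h s.
Proof.
rewrite /lik_int /lik_mass -RintegralZl //.
  by apply: eq_Rintegral => th _; rewrite mulrC.
exact: bmfun_integrable (probability_lty mu1) (bmfun_lik h s).
Qed.

Lemma lik_int_ge0 h s f : (forall th, 0 <= f th) -> 0 <= lik_int h s f.
Proof.
move=> f0; apply: Rintegral_ge0 => th _; rewrite mulr_ge0 //.
by case/andP: (lik_bounds th h s).
Qed.

Lemma lik_mass_ge0 h s : 0 <= lik_mass h s.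
Proof. by apply: Rintegral_ge0 => th _; case/andP: (lik_bounds th h s). Qed.

Lemma lik_int_le h s f g : bmfun f -> bmfun g -> (forall th, f th <= g th) ->
  lik_int h s f <= lik_int h s g.
Proof.
move=> bf bg fg; apply: le_Rintegral => //; try exact: lik_int_integrable.
by move=> th _; rewrite ler_wpM2l //; case/andP: (lik_bounds th h s).
Qed.

Lemma lik_int_sum h s (I : Type) (r : seq I) (F : I -> Theta -> R) :
  (forall i, bmfun (F i)) ->
  lik_int h s (fun th => \sum_(i <- r) F i th) = \sum_(i <- r) lik_int h s (F i).
Proof.
move=> bF; elim: r => [|i r IH].
  by under eq_fun do rewrite big_nil; rewrite lik_int_cst mul0r big_nil.
under eq_fun do rewrite big_cons.
by rewrite lik_intD ?big_cons ?IH //; exact: bmfun_sum.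
Qed.

Lemma lik_int_rcons h s a1 a2 s' f :
  lik_int (rcons h (s, (a1, a2))) s' f = lik_int h s (fun th => P th s a1 a2 s' * f th).
Proof.
by rewrite /lik_int; apply: eq_Rintegral => th _; rewrite lik_rcons mulrA.
Qed.

Lemma bmfun_lik_int h s (C : Theta * Theta -> R) :
  bmfun C -> bmfun (fun y => lik_int h s (fun th => C (y, th))).
Proof.
move=> bC; apply: (bmfun_partial_Rintegral mu1 (F := fun z => lik P z.2 h s * C z)).
exact: bmfunM (bmfun_comp (bmfun_lik h s) measurable_snd) bC.
Qed.

Lemma lik_int_swap h s (C : Theta * Theta -> R) : bmfun C ->
  lik_int h s (fun x => lik_int h s (fun th => C (x, th))) =
  lik_int h s (fun th => lik_int h s (fun x => C (x, th))).
Proof.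
move=> bC; have lik_fst := bmfun_comp (bmfun_lik h s) (@measurable_fst _ _ Theta Theta).
have lik_snd := bmfun_comp (bmfun_lik h s) (@measurable_snd _ _ Theta Theta).
rewrite /lik_int.
transitivity (\int[mu1]_x \int[mu1]_th (lik P x h s * (lik P th h s * C (x, th)))).
  apply: eq_Rintegral => x _; rewrite -RintegralZl //.
  exact: lik_int_integrable (bmfun_pair1 x bC).
rewrite (Rintegral_swap mu1 (F := fun z => lik P z.1 h s * (lik P z.2 h s * C z))); last first.
  by apply: bmfunM lik_fst (bmfunM lik_snd bC).
apply: eq_Rintegral => th _; rewrite -RintegralZl //; last first.
  exact: lik_int_integrable (bmfun_pair2 th bC).
by apply: eq_Rintegral => x _; rewrite mulrCA.
Qed.

Lemma post_exp_le h s f g : lik_int h s f <= lik_int h s g ->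
  post_exp h s f <= post_exp h s g.
Proof. by move=> fg; rewrite !post_expE ler_wpM2r // invr_ge0 lik_mass_ge0. Qed.

Lemma post_expB h s f g : bmfun f -> bmfun g ->
  post_exp h s (fun th => f th - g th) =
  post_exp h s f - post_exp h s g.
Proof. by move=> bf bg; rewrite !post_expE lik_intB // mulrBl. Qed.

Lemma bmfun_post_exp h s (C : Theta * Theta -> R) :
  bmfun C -> bmfun (fun y => post_exp h s (fun th => C (y, th))).
Proof. by move=> bC; apply: bmfunM (bmfun_cst _); exact: bmfun_lik_int. Qed.

Lemma post_exp_addr h s f c : lik_mass h s != 0 -> bmfun f ->
  post_exp h s (fun th => f th + c) = post_exp h s f + c.
Proof.
move=> mass_neq0 bf; rewrite !post_expE (@lik_intD h s f (fun=> c)) ?lik_int_cst //.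
  by rewrite mulrDl mulfK.
exact: bmfun_cst.
Qed.

Lemma lik_int_post_exp_swap h s (C : Theta * Theta -> R) : bmfun C ->
  lik_int h s (fun x => post_exp h s (fun th => C (x, th))) =
  lik_int h s (fun th => post_exp h s (fun x => C (x, th))).
Proof.
move=> bC; under eq_fun do rewrite post_expE mulrC.
under [in RHS]eq_fun do rewrite post_expE mulrC.
rewrite (lik_intZ h s _ (bmfun_lik_int h s bC)).
by rewrite (lik_intZ h s _ (bmfun_lik_int h s (bmfun_swap bC))) lik_int_swap.
Qed.

Lemma lik_int_post_exp_exchange h s (F G : Theta -> R) :
  lik_mass h s != 0 -> bmfun F -> bmfun G ->
  lik_int h s (fun th => post_exp h s (fun x => F x - F th + G th)) =
  lik_int h s G.
Proof.
move=> mass_neq0 bF bG.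
have centered th : post_exp h s (fun x => F x - F th + G th) =
                   lik_int h s F / lik_mass h s + (G th - F th).
  rewrite -post_expE -post_exp_addr //; congr post_exp; apply/funext => x.
  by rewrite -addrA [- F th + _]addrC.
under eq_fun do rewrite centered.
rewrite (@lik_intD h s (fun=> _)) ?lik_intB ?lik_int_cst //; last exact: bmfunB.
  by rewrite mulfVK // addrCA subrr addr0.
exact: bmfun_cst.
Qed.

(* Swapping the roles of the sample [th] and the true parameter [x] (Fubini)
   makes the part [F x - F th] of the bound average out. *)
Lemma lik_int_posterior_sampling h s (C : Theta * Theta -> R) (F G U : Theta -> R) :
  bmfun C -> bmfun F -> bmfun G -> bmfun U ->
  (forall th, lik_int h s (fun x => C (x, th)) <=
              lik_int h s (fun x => F x - F th + G th)) ->
  (forall x, 0 <= U x) -> (forall x, G x <= U x) ->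
  lik_int h s (fun x => post_exp h s (fun th => C (x, th))) <= lik_int h s U.
Proof.
move=> bC bF bG bU C_le U_ge0 G_le_U.
have [mass0 | mass_neq0] := eqVneq (lik_mass h s) 0.
  (* there [post_exp] divides by 0, hence is 0 *)
  under eq_fun do rewrite post_expE mass0 invr0 mulr0.
  by rewrite lik_int_cst mul0r lik_int_ge0.
rewrite lik_int_post_exp_swap //.
apply: (@le_trans _ _
  (lik_int h s (fun th => post_exp h s (fun x => F x - F th + G th)))).
  apply: lik_int_le => [||th]; last exact: post_exp_le.
    exact: bmfun_post_exp (bmfun_swap bC).
  apply: (@bmfun_post_exp h s (fun z => F z.2 - F z.1 + G z.1)).
  apply: bmfunD; last exact: bmfun_comp bG measurable_fst.
  exact: bmfunB (bmfun_comp bF measurable_snd) (bmfun_comp bF measurable_fst).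
by rewrite lik_int_post_exp_exchange // lik_int_le.
Qed.

Section Episodes.
Variables (pol : Theta -> S -> A1 -> R) (pi2 : seq (S * (A1 * A2)) -> S -> A2 -> R).
Hypothesis pol_dist : forall th s, is_dist (pol th s).
Hypothesis pol_meas : forall s a1, measurable_fun setT (fun th => pol th s a1).
Hypothesis pi2_dist : forall h s, is_dist (pi2 h s).

Local Notation psrl_val := (psrl_val mu1 P pol pi2).

Lemma bmfun_pol s a1 : bmfun (fun th => pol th s a1).
Proof.
split; first exact: pol_meas.
exists 1 => th; have dp := pol_dist th s.
by rewrite ger0_norm; [exact: dist_le1 | exact: dist_ge0].
Qed.

Lemma step_mean_cst h s th x c :
  \sum_a1 \sum_a2 \sum_s' pol th s a1 * pi2 h s a2 * P x s a1 a2 s' * c = c.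
Proof.
rewrite -[RHS](dist_mean_cst c (pol_dist th s)); apply: eq_bigr => a1 _.
rewrite -[c in RHS](dist_mean_cst c (pi2_dist h s)) mulr_sumr; apply: eq_bigr => a2 _.
rewrite -[c in RHS](dist_mean_cst c (P_kernel x s a1 a2)) !mulr_sumr.
by apply: eq_bigr => s' _; rewrite !mulrA.
Qed.

Lemma bmfun_step_weight h s th a1 a2 s' f : bmfun f ->
  bmfun (fun x => pol th s a1 * pi2 h s a2 * P x s a1 a2 s' * f x).
Proof.
move=> bf; apply: bmfunM bf; apply: bmfunM (bmfun_kernel _ _ _ _).
exact: bmfun_cst.
Qed.

Lemma lik_int_step h s th (v : A1 -> A2 -> S -> Theta -> R) :
  (forall a1 a2 s', bmfun (v a1 a2 s')) ->
  lik_int h s (fun x => \sum_a1 \sum_a2 \sum_s'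
                 pol th s a1 * pi2 h s a2 * P x s a1 a2 s' * v a1 a2 s' x) =
  \sum_a1 \sum_a2 \sum_s' pol th s a1 * pi2 h s a2 *
                 lik_int (rcons h (s, (a1, a2))) s' (v a1 a2 s').
Proof.
move=> bv; rewrite lik_int_sum => [|a1]; last first.
  by do 2 apply: bmfun_sum => ?; exact: bmfun_step_weight.
apply: eq_bigr => a1 _; rewrite lik_int_sum => [|a2]; last first.
  by apply: bmfun_sum => ?; exact: bmfun_step_weight.
apply: eq_bigr => a2 _; rewrite lik_int_sum => [|s']; last exact: bmfun_step_weight.
apply: eq_bigr => s' _; rewrite lik_int_rcons -lik_intZ; last first.
  by apply: bmfunM (bv _ _ _); exact: bmfun_kernel.
by congr (lik_int _ _ _); apply/funext => x; rewrite mulrA.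
Qed.

Lemma lik_int_step_le h s th f (v : A1 -> A2 -> S -> Theta -> R) U :
  bmfun f -> (forall a1 a2 s', bmfun (v a1 a2 s')) -> bmfun U ->
  (forall a1 a2 s', lik_int (rcons h (s, (a1, a2))) s' (v a1 a2 s') <=
                    lik_int (rcons h (s, (a1, a2))) s' U) ->
  lik_int h s (fun x => f x + \sum_a1 \sum_a2 \sum_s'
                 pol th s a1 * pi2 h s a2 * P x s a1 a2 s' * v a1 a2 s' x) <=
  lik_int h s (fun x => f x + U x).
Proof.
move=> bf bv bU v_le_U.
have bsum (w : A1 -> A2 -> S -> Theta -> R) : (forall a1 a2 s', bmfun (w a1 a2 s')) ->
    bmfun (fun x => \sum_a1 \sum_a2 \sum_s'
                      pol th s a1 * pi2 h s a2 * P x s a1 a2 s' * w a1 a2 s' x).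
  by move=> bw; do 3 apply: bmfun_sum => ?; exact: bmfun_step_weight.
rewrite (lik_intD _ _ bf (bsum _ bv)) (lik_intD _ _ bf bU) lerD2l.
have -> : lik_int h s U = lik_int h s (fun x => \sum_a1 \sum_a2 \sum_s'
                 pol th s a1 * pi2 h s a2 * P x s a1 a2 s' * U x).
  by congr (lik_int _ _ _); apply/funext => x; rewrite step_mean_cst.
rewrite (lik_int_step h s th bv) (@lik_int_step h s th (fun _ _ _ => U)) //.
do 3 (apply: ler_sum => ? _); apply: ler_wpM2l => //.
by apply: mulr_ge0; exact: dist_ge0.
Qed.

Definition new_episode (h : seq (S * (A1 * A2))) (tk Tp : nat) : bool :=
  (tk + Tp < (size h).+1)%N ||
  [exists x : S * (A1 * A2), (2 * count_mem x (take tk.-1 h) < count_mem x h)%N].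

Definition psrl_next g n ths h s tk Tp th (b : bool) : R :=
  g ths th b + \sum_a1 \sum_a2 \sum_s' pol th s a1 * pi2 h s a2 * P ths s a1 a2 s' *
    psrl_val g n ths (rcons h (s, (a1, a2))) s' tk Tp th.

Lemma psrl_val_S g n ths h s tk Tp thk :
  psrl_val g n.+1 ths h s tk Tp thk =
  if new_episode h tk Tp
  then post_exp h s (psrl_next g n ths h s (size h).+1 ((size h).+1 - tk) ^~ true)
  else psrl_next g n ths h s tk Tp thk false.
Proof. by rewrite /= /new_episode; case: (_ || _). Qed.

Definition bmgain (g : Theta -> Theta -> bool -> R) :=
  forall b, bmfun (fun z : Theta * Theta => g z.1 z.2 b).

Lemma bmfun_psrl_next_of g n h s tk Tp b : bmgain g ->
  (forall h s tk Tp, bmfun (fun z : Theta * Theta => psrl_val g n z.1 h s tk Tp z.2)) ->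
  bmfun (fun z : Theta * Theta => psrl_next g n z.1 h s tk Tp z.2 b).
Proof.
move=> bg bval; apply: bmfunD (bg b) _; do 3 apply: bmfun_sum => ?.
apply: bmfunM (bval _ _ _ _).
apply: bmfunM (bmfun_comp (bmfun_kernel _ _ _ _) measurable_fst).
exact: bmfunM (bmfun_comp (bmfun_pol _ _) measurable_snd) (bmfun_cst _).
Qed.

Lemma bmfun_psrl_val g n h s tk Tp : bmgain g ->
  bmfun (fun z : Theta * Theta => psrl_val g n z.1 h s tk Tp z.2).
Proof.
move=> bg; elim: n h s tk Tp => [|n IH] h s tk Tp; first exact: bmfun_cst.
under eq_fun do rewrite psrl_val_S.
case: new_episode; last exact: bmfun_psrl_next_of.
apply: (@bmfun_comp _ _ _ _ _
  (fun y => post_exp h s (psrl_next g n y h s (size h).+1 ((size h).+1 - tk) ^~ true)))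
  _ measurable_fst.
exact: bmfun_post_exp (bmfun_psrl_next_of _ _ _ _ _ bg IH).
Qed.

Lemma bmfun_psrl_next g n h s tk Tp b : bmgain g ->
  bmfun (fun z : Theta * Theta => psrl_next g n z.1 h s tk Tp z.2 b).
Proof. by move=> bg; apply: bmfun_psrl_next_of => // *; exact: bmfun_psrl_val. Qed.

Lemma psrl_valB g1 g2 n ths h s tk Tp thk : bmgain g1 -> bmgain g2 ->
  psrl_val g1 n ths h s tk Tp thk - psrl_val g2 n ths h s tk Tp thk =
  psrl_val (fun ths th b => g1 ths th b - g2 ths th b) n ths h s tk Tp thk.
Proof.
move=> bg1 bg2; elim: n h s tk Tp thk => [|n IH] h s tk Tp thk; first by rewrite subr0.
have nextB tk' Tp' th b :
    psrl_next g1 n ths h s tk' Tp' th b - psrl_next g2 n ths h s tk' Tp' th b =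
    psrl_next (fun ths th b => g1 ths th b - g2 ths th b) n ths h s tk' Tp' th b.
  rewrite /psrl_next opprD addrACA; congr (_ + _).
  rewrite -sumrB; apply: eq_bigr => a1 _; rewrite -sumrB; apply: eq_bigr => a2 _.
  by rewrite -sumrB; apply: eq_bigr => s' _; rewrite -mulrBr IH.
rewrite !psrl_val_S; case: new_episode; last exact: nextB.
rewrite -post_expB; first by congr post_exp; apply/funext => th; exact: nextB.
  exact: bmfun_pair1 ths (bmfun_psrl_next _ _ _ _ _ _ bg1).
exact: bmfun_pair1 ths (bmfun_psrl_next _ _ _ _ _ _ bg2).
Qed.

(* At t = 1 an episode always starts. *)
Lemma psrl_val_nil g n ths s thk thk' :
  psrl_val g n ths [::] s 0 0 thk = psrl_val g n ths [::] s 0 0 thk'.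
Proof. by case: n. Qed.

Section Regret.
Variable Jf : Theta -> R.
Hypothesis Jf_bounds : forall th, -1 <= Jf th <= 0.
Hypothesis Jf_meas : measurable_fun setT Jf.

Definition regret_gain ths th (b : bool) : R := Jf ths - Jf th - b%:R.

Definition potential thk (a b : nat) x : R := a%:R * - Jf thk + b%:R * - Jf x.

Lemma bmfun_Jf : bmfun Jf.
Proof.
split => //; exists 1 => th; have /andP[J_ge J_le] := Jf_bounds th.
by rewrite ler0_norm // lerNl.
Qed.

Lemma bmgain_regret_gain : bmgain regret_gain.
Proof.
move=> b; apply: bmfunB (bmfun_cst _).
exact: bmfunB (bmfun_comp bmfun_Jf measurable_fst) (bmfun_comp bmfun_Jf measurable_snd).
Qed.

Lemma bmfun_potential thk a b : bmfun (potential thk a b).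
Proof. exact: bmfunD (bmfun_cst _) (bmfunM (bmfun_cst _) (bmfunN bmfun_Jf)). Qed.

Lemma potential_ge0 thk a b x : 0 <= potential thk a b x.
Proof.
have /andP[_ Jthk_le0] := Jf_bounds thk; have /andP[_ Jx_le0] := Jf_bounds x.
by rewrite addr_ge0 // mulr_ge0 // oppr_ge0.
Qed.

Lemma regret_gain_potential thk a b x :
  regret_gain x thk false + potential thk a b.+1 x = potential thk a.+1 b x.
Proof. by rewrite /regret_gain /potential -!natr1 /=; ring. Qed.

Lemma lik_int_psrl_next_le n h s tk Tp th b a' b' :
  (forall a1 a2 s', lik_int (rcons h (s, (a1, a2))) s'
       (fun x => psrl_val regret_gain n x (rcons h (s, (a1, a2))) s' tk Tp th)
     <= lik_int (rcons h (s, (a1, a2))) s' (potential th a' b')) ->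
  lik_int h s (fun x => psrl_next regret_gain n x h s tk Tp th b) <=
  lik_int h s (fun x => regret_gain x th b + potential th a' b' x).
Proof.
apply: lik_int_step_le; last exact: bmfun_potential.
  exact: bmfun_pair2 (bmgain_regret_gain b).
by move=> *; exact: bmfun_pair2 (bmfun_psrl_val _ _ _ _ _ bmgain_regret_gain).
Qed.

Lemma lik_int_psrl_val_le_potential n h s tk Tp thk :
  (tk <= size h <= tk + Tp)%N ->
  lik_int h s (fun x => psrl_val regret_gain n x h s tk Tp thk) <=
  lik_int h s (potential thk (tk + Tp - size h) (size h - tk)).
Proof.
elim: n h s tk Tp thk => [|n IH] h s tk Tp thk /andP[tk_le h_le].
  by rewrite lik_int_cst mul0r; apply: lik_int_ge0 => x; exact: potential_ge0.
under eq_fun do rewrite psrl_val_S.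
case ep : (new_episode h tk Tp); last first.
  have [h_lt _] := norP (negbT ep); rewrite -leqNgt in h_lt.
  apply: le_trans (@lik_int_psrl_next_le n h s tk Tp thk false
                     (tk + Tp - (size h).+1) ((size h).+1 - tk) _) _.
    move=> a1 a2 s'; have := IH (rcons h (s, (a1, a2))) s' tk Tp thk.
    by rewrite size_rcons (leqW tk_le) h_lt; apply.
  apply: lik_int_le => [||x]; try exact: bmfun_potential.
    exact: bmfunD (bmfun_pair2 _ (bmgain_regret_gain _)) (bmfun_potential _ _ _).
  by rewrite subSn // regret_gain_potential subnSK.
set m := ((size h).+1 - tk)%N.
apply: (@lik_int_posterior_sampling h s
  (fun z => psrl_next regret_gain n z.1 h s (size h).+1 m z.2 true)
  Jf (fun th => -1 - m%:R * Jf th)).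
- exact: bmfun_psrl_next _ _ _ _ _ _ bmgain_regret_gain.
- exact: bmfun_Jf.
- exact: bmfunB (bmfun_cst _) (bmfunM (bmfun_cst _) bmfun_Jf).
- exact: bmfun_potential.
- move=> th; apply: le_trans (@lik_int_psrl_next_le n h s (size h).+1 m th true m 0 _) _.
    move=> a1 a2 s'; have := IH (rcons h (s, (a1, a2))) s' (size h).+1 m th.
    by rewrite size_rcons addKn subnn leqnn leq_addr; apply.
  apply: lik_int_le => [||x]; try exact: bmfunD (bmfunB bmfun_Jf (bmfun_cst _)) (bmfun_cst _).
    exact: bmfunD (bmfun_pair2 _ (bmgain_regret_gain _)) (bmfun_potential _ _ _).
  rewrite /regret_gain /potential /=; lra.
- exact: potential_ge0.
move=> x; have /andP[Jx_ge Jx_le] := Jf_bounds x.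
have := potential_ge0 thk (tk + Tp - size h) 0 x.
rewrite /potential /m subSn // -natr1; lra.
Qed.

Lemma psrl_regret_le0 s1 T :
  \int[mu1]_x psrl_val regret_gain T x [::] s1 0 0 x <= 0.
Proof.
have [th0 _] : [set: Theta] !=set0.
  apply/set0P/negP => /eqP T0; have := probability_setT mu1.
  by rewrite T0 measure0 => -[] /eqP; rewrite eq_sym oner_eq0.
rewrite (_ : \int[mu1]_x _ =
             lik_int [::] s1 (fun x => psrl_val regret_gain T x [::] s1 0 0 th0)).
  have := @lik_int_psrl_val_le_potential T [::] s1 0 0 th0 isT.
  rewrite /potential /=; under [in X in _ <= X -> _]eq_fun do rewrite !mul0r addr0.
  by rewrite lik_int_cst mul0r.
by apply: eq_Rintegral => x _; rewrite mul1r (psrl_val_nil _ _ _ _ _ th0).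
Qed.

End Regret.

End Episodes.
End Posterior.

Theorem lemma1 (R : realType) (d : measure_display) (Theta : measurableType d)
  (S A1 A2 : finType) (r : S -> A1 -> A2 -> R) (D H : R)
  (mu1 : probability Theta R) (P : Theta -> @tkernel R S A1 A2)
  (pol : Theta -> S -> A1 -> R) (pi2 : seq (S * (A1 * A2)) -> S -> A2 -> R)
  (s1 : S) (T : nat) :
  (forall s a1 a2, -1 <= r s a1 a2 <= 0) ->
  (forall th, is_kernel (P th)) ->
  (forall s a1 a2 s', measurable_fun setT (fun th => P th s a1 a2 s')) ->
  measurable_fun setT (fun th => Jopt r (P th)) ->
  (exists A, measurable A /\ A `<=` [set th | Omega r D H (P th)] /\
             mu1 A = 1%E) ->
  (forall th s, is_dist (pol th s)) ->
  (forall s a1, measurable_fun setT (fun th => pol th s a1)) ->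
  (forall th, Omega r D H (P th) ->
     exists v, bellman r (P th) (Jopt r (P th)) v /\
       forall s, is_maximin (bgame r (P th) v s) (pol th s)) ->
  (forall h s, is_dist (pi2 h s)) ->
  psrl_exp mu1 P pol pi2
    (fun ths th _ => Jopt r (P ths) - Jopt r (P th)) T s1
  <= psrl_exp mu1 P pol pi2 (fun _ _ newep => (newep : bool)%:R) T s1.
Proof.
move=> r_bnd P_kernel P_meas J_meas _ pol_dist pol_meas _ pi2_dist.
pose Jf th := Jopt r (P th).
have Jf_bounds th : -1 <= Jf th <= 0.
  by apply: (Jopt_bounds s1) => //; [exists (pol th s1) | exists (pi2 [::] s1)].
have bJf := bmfun_Jf Jf_bounds J_meas.
have gain_J : bmgain (fun ths th (_ : bool) => Jf ths - Jf th).
  move=> b; exact: bmfunB (bmfun_comp bJf measurable_fst) (bmfun_comp bJf measurable_snd).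
have gain_ep : bmgain (fun _ _ : Theta => fun b : bool => b%:R : R).
  by move=> b; exact: bmfun_cst.
have psrl_exp_integrable g : bmgain g ->
    mu1.-integrable setT (EFin \o fun x => psrl_val mu1 P pol pi2 g T x [::] s1 0 0 x).
  move=> bg; apply: bmfun_integrable (probability_lty mu1) _.
  exact: bmfun_diag
    (bmfun_psrl_val mu1 P_kernel P_meas pi2 pol_dist pol_meas T [::] s1 0 0 bg).
rewrite /psrl_exp -subr_le0 -RintegralB ?psrl_exp_integrable //.
rewrite (_ : \int[mu1]_x _ =
             \int[mu1]_x psrl_val mu1 P pol pi2 (regret_gain Jf) T x [::] s1 0 0 x).
  exact: psrl_regret_le0.
by apply: eq_Rintegral => x _; exact: psrl_valB.
Qed.
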